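(* Let $\lambda$ be a regular uncountable cardinal and $S\subseteq\lambda$ stationary. If $\mathsf{DSR}(1,S)$ holds, then $\mathrm{Refl}(\omega,S)$ holds.
   Context: A set $T$ of ordinals reflects at $\gamma$ if $\mathrm{cf}(\gamma)>\omega$ and $T\cap\gamma$ is stationary in $\gamma$. $\mathsf{DSR}(1,S)$ asserts: whenever $\langle S_{\alpha,i}\mid\alpha<\lambda,\ i<j_\alpha\rangle$ is a matrix of stationary subsets of $S$ with $j_\alpha\le 1$ for all $\alpha$, there are $\gamma<\lambda$ of uncountable cofinality and a club $F\subseteq\gamma$ such that $S_{\alpha,i}$ reflects at $\gamma$ for all $\alpha\in F$ and $i<j_\alpha$ (equivalently: for every sequence $\langle S_\alpha\mid\alpha<\lambda\rangle$ of stationary subsets of $S$ there are such $\gamma$ and club $F\subseteq\gamma$ with $S_\alpha$ reflecting at $\gamma$ for all $\alpha\in F$). $\mathrm{Refl}(\omega,S)$ asserts that every family of countably many stationary subsets of $S$ reflects simultaneously, i.e., there is $\gamma<\lambda$ at which every member of the family reflects. *)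

(* The regular cardinal lambda is modelled as a well-ordered
   type (T, lt): an ordinal gamma < lambda is an element gamma : T, identified
   with its initial segment {x | lt x gamma}. *)
From Stdlib Require Import Arith.

Section SetTheory.
Variable T : Type.
Variable lt : T -> T -> Prop.

Definition well_order : Prop :=
  (forall x, ~ lt x x) /\
  (forall x y z, lt x y -> lt y z -> lt x z) /\
  (forall x y, lt x y \/ x = y \/ lt y x) /\
  well_founded lt.

Definition le (x y : T) : Prop := lt x y \/ x = y.

Definition below (g : T) : T -> Prop := fun x => lt x g.
Definition whole : T -> Prop := fun _ => True.

Definition is_cardinal : Prop :=
  forall (g : T) (f : T -> T),
    (forall x y, f x = f y -> x = y) -> exists x, ~ lt (f x) g.

Definition uncountable : Prop :=
  ~ exists f : T -> nat, forall x y, f x = f y -> x = y.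

Definition is_regular : Prop :=
  forall A : T -> Prop, (forall x, exists a, A a /\ le x a) ->
    exists f : T -> T, (forall x y, f x = f y -> x = y) /\ (forall x, A (f x)).

Definition regular_uncountable_cardinal : Prop :=
  is_cardinal /\ is_regular /\ uncountable.

Definition uncountable_cof (g : T) : Prop :=
  (exists x, lt x g) /\
  ~ exists f : nat -> T, (forall n, lt (f n) g) /\
                         (forall x, lt x g -> exists n, le x (f n)).

(* clubs and stationary sets inside a domain D (D = below gamma, or whole) *)
Definition unbounded_in (D A : T -> Prop) : Prop :=
  forall x, D x -> exists a, A a /\ D a /\ lt x a.

Definition closed_in (D A : T -> Prop) : Prop :=
  forall b, D b -> (exists x, lt x b) ->
    (forall x, lt x b -> exists a, A a /\ lt x a /\ lt a b) -> A b.

Definition club_in (D A : T -> Prop) : Prop :=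
  (forall a, A a -> D a) /\ unbounded_in D A /\ closed_in D A.

Definition stationary_in (D X : T -> Prop) : Prop :=
  forall C, club_in D C -> exists x, X x /\ C x.

Definition stationary (X : T -> Prop) : Prop := stationary_in whole X.

Definition reflects_at (X : T -> Prop) (g : T) : Prop :=
  uncountable_cof g /\ stationary_in (below g) X.

Definition subset (X Y : T -> Prop) : Prop := forall x, X x -> Y x.

(* DSR(1,S), matrix form: rows alpha < lambda of length j alpha <= 1 *)
Definition DSR1 (S : T -> Prop) : Prop :=
  forall (j : T -> nat) (M : T -> nat -> T -> Prop),
    (forall a, j a <= 1) ->
    (forall a i, i < j a -> stationary (M a i) /\ subset (M a i) S) ->
    exists g, uncountable_cof g /\
      exists F, club_in (below g) F /\
        forall a, F a -> forall i, i < j a -> reflects_at (M a i) g.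

Definition Refl_omega (S : T -> Prop) : Prop :=
  forall M : nat -> T -> Prop,
    (forall n, stationary (M n) /\ subset (M n) S) ->
    exists g, forall n, reflects_at (M n) g.

End SetTheory.

From Stdlib Require Import Arith Lia Classical ClassicalEpsilon.

(* Refine the given sets to pairwise disjoint stationary sets U_i, with
   U_i contained in M_n for infinitely many i for each n; this rests on
   Solovay's splitting of a stationary set into unboundedly many disjoint
   stationary pieces.  Apply DSR(1,S) to the matrix whose row a is U_(i+1)
   when a lies in U_i (and U_0 otherwise), obtaining gamma and a club F in
   gamma.  Some U_k reflects at gamma, and if U_i reflects at gamma then it
   meets F at some a, whose row U_(i+1) therefore reflects as well.  So every
   U_i with i >= k reflects at gamma, and with them every M_n. *)

Lemma choice_on {A B : Type} (P : A -> Prop) (R : A -> B -> Prop) :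
  inhabited B -> (forall x, P x -> exists y, R x y) ->
  exists f : A -> B, forall x, P x -> R x (f x).
Proof.
  intros [b] H. apply (choice (fun x y => P x -> R x y)). intro x.
  destruct (classic (P x)) as [Hx | Hx].
  - destruct (H x Hx) as [y Hy]. eauto.
  - exists b. tauto.
Qed.

Section StationaryReflection.
Variable T : Type.
Variable lt : T -> T -> Prop.
Hypothesis lt_wo : well_order T lt.
Hypothesis lambda_ruc : regular_uncountable_cardinal T lt.

Local Notation "x << y" := (lt x y) (at level 70).
Local Notation "x <<= y" := (le T lt x y) (at level 70).
Local Notation club := (club_in T lt (whole T)).
Local Notation stat := (stationary T lt).

Lemma lt_irrefl x : ~ x << x.
Proof. apply lt_wo. Qed.

Lemma lt_trans x y z : x << y -> y << z -> x << z.
Proof. apply lt_wo. Qed.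

Lemma lt_trichotomy x y : x << y \/ x = y \/ y << x.
Proof. apply lt_wo. Qed.

Lemma le_lt_trans x y z : x <<= y -> y << z -> x << z.
Proof. intros [Hxy | <-] Hyz; [exact (lt_trans _ _ _ Hxy Hyz) | exact Hyz]. Qed.

Lemma lt_le_trans x y z : x << y -> y <<= z -> x << z.
Proof. intros Hxy [Hyz | <-]; [exact (lt_trans _ _ _ Hxy Hyz) | exact Hxy]. Qed.

Lemma not_lt_le x y : ~ x << y -> y <<= x.
Proof.
  intro H. destruct (lt_trichotomy x y) as [Hxy | [-> | Hyx]];
    [contradiction | right | left]; auto.
Qed.

Lemma not_le_lt x y : ~ x <<= y -> y << x.
Proof.
  intro H. destruct (lt_trichotomy x y) as [Hxy | [-> | Hyx]];
    [contradict H; left | contradict H; right |]; auto.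
Qed.

Lemma le_not_lt x y : x <<= y -> ~ y << x.
Proof. intros Hxy Hyx. exact (lt_irrefl _ (le_lt_trans _ _ _ Hxy Hyx)). Qed.

Lemma exists_least (P : T -> Prop) :
  (exists x, P x) -> exists x, P x /\ forall y, P y -> ~ y << x.
Proof.
  intros [x Hx]. revert Hx.
  induction x as [x IH] using (well_founded_ind (proj2 (proj2 (proj2 lt_wo)))).
  intro Hx. destruct (classic (exists y, P y /\ y << x)) as [[y [Hy Hyx]] | Hmin].
  - exact (IH y Hyx Hy).
  - exists x. split; [exact Hx|]. intros y Hy Hyx. apply Hmin. eauto.
Qed.

Lemma exists_max_below x y z :
  x << z -> y << z -> exists m, x <<= m /\ y <<= m /\ m << z.
Proof.
  intros Hx Hy. destruct (lt_trichotomy x y) as [Hxy | [<- | Hyx]].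
  - exists y. repeat split; [left | right |]; auto.
  - exists x. repeat split; [right | right |]; auto.
  - exists x. repeat split; [right | left |]; auto.
Qed.

Lemma T_inhabited : inhabited T.
Proof.
  destruct lambda_ruc as [_ [_ Hunc]]. apply NNPP. intro Hempty. apply Hunc.
  exists (fun _ => 0). intro x. exfalso. exact (Hempty (inhabits x)).
Qed.

Lemma image_bounded {I : Type} (s : I -> T) :
  ~ (exists e : T -> I, forall x y, e x = e y -> x = y) ->
  exists b, forall i, s i << b.
Proof.
  intro Hsmall. destruct lambda_ruc as [_ [Hreg _]].
  apply NNPP. intro Hunb.
  destruct (Hreg (fun a => exists i, s i = a)) as [h [Hh_inj Hh_range]].
  { intro x. apply NNPP. intro Hx. apply Hunb. exists x. intro i.
    apply not_le_lt. intro Hle. apply Hx. eauto. }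
  destruct (choice _ Hh_range) as [idx Hidx].
  apply Hsmall. exists idx. intros x y Hxy. apply Hh_inj.
  rewrite <- (Hidx x), <- (Hidx y), Hxy. reflexivity.
Qed.

Lemma seq_bounded (s : nat -> T) : exists b, forall n, s n << b.
Proof. apply image_bounded. apply lambda_ruc. Qed.

Lemma segment_image_bounded d (f : T -> T) : exists b, forall x, x << d -> f x << b.
Proof.
  destruct (image_bounded (fun x : {x | x << d} => f (proj1_sig x))) as [b Hb].
  - intros [e He]. destruct lambda_ruc as [Hcard _].
    destruct (Hcard d (fun x => proj1_sig (e x))) as [x Hx].
    + intros x y Hxy. apply He. apply eq_sig_hprop; [|exact Hxy].
      intros; apply proof_irrelevance.
    + exact (Hx (proj2_sig (e x))).
  - exists b. intros x Hx. exact (Hb (exist _ x Hx)).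
Qed.

Lemma countable_family_bounded (R : nat -> T -> Prop) :
  (forall n d d', R n d -> R n d' -> d = d') -> exists b, forall n d, R n d -> d << b.
Proof.
  intro Huniq.
  destruct (choice_on (fun n => exists d, R n d) R T_inhabited) as [sel Hsel].
  { intros n H. exact H. }
  destruct (seq_bounded sel) as [b Hb]. exists b. intros n d Hd.
  rewrite (Huniq n d (sel n) Hd (Hsel n (ex_intro _ d Hd))). apply Hb.
Qed.

Lemma no_greatest x : exists y, x << y.
Proof. destruct (seq_bounded (fun _ => x)) as [y Hy]. exists y. exact (Hy 0). Qed.

Lemma exists_above2 x y : exists z, x << z /\ y << z.
Proof.
  destruct (seq_bounded (fun n => if n =? 0 then x else y)) as [z Hz].
  exists z. exact (conj (Hz 0) (Hz 1)).
Qed.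

Definition increasing (s : nat -> T) : Prop := forall n, s n << s (S n).

Lemma increasing_le s i j : increasing s -> i <= j -> s i <<= s j.
Proof.
  intros Hs Hij. induction Hij as [|j _ IH]; [now right | left].
  exact (le_lt_trans _ _ _ IH (Hs j)).
Qed.

Lemma seq_rec (R : nat -> T -> T -> Prop) x0 :
  (forall n x, exists y, R n x y) ->
  exists s : nat -> T, s 0 = x0 /\ forall n, R n (s n) (s (S n)).
Proof.
  intro H.
  destruct (choice (fun n (g : T -> T) => forall x, R n x (g x)) (fun n => choice _ (H n)))
    as [step Hstep].
  exists (fix s n := match n with 0 => x0 | S n => step n (s n) end).
  split; [reflexivity|]. intro n. apply Hstep.
Qed.

Definition converges (s : nat -> T) (l : T) : Prop :=
  (forall n, s n << l) /\ forall x, x << l -> exists n, x << s n.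

Lemma converges_least s l b : converges s l -> (forall n, s n << b) -> l <<= b.
Proof.
  intros [_ Hcof] Hb. apply not_lt_le. intro Hbl.
  destruct (Hcof b Hbl) as [n Hn]. exact (lt_irrefl _ (lt_trans _ _ _ Hn (Hb n))).
Qed.

Lemma converges_above2 s l x y :
  converges s l -> x << l -> y << l -> exists n, x << s n /\ y << s n.
Proof.
  intros [_ Hcof] Hx Hy. destruct (exists_max_below x y l Hx Hy) as [m [Hxm [Hym Hml]]].
  destruct (Hcof m Hml) as [n Hn]. exists n.
  split; eapply le_lt_trans; eassumption.
Qed.

Lemma increasing_converges s : increasing s -> exists l, converges s l.
Proof.
  intro Hs.
  destruct (exists_least (fun b => forall n, s n << b) (seq_bounded s)) as [l [Hl Hmin]].
  exists l. split; [exact Hl|]. intros x Hx. apply NNPP. intro Hnone.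
  apply (Hmin x); [|exact Hx]. intro n. apply (lt_le_trans _ (s (S n))); [apply Hs|].
  apply not_lt_le. intro H. apply Hnone. eauto.
Qed.

Lemma omega_limit (R : T -> T -> Prop) x0 :
  (forall x, exists y, x << y /\ R x y) ->
  exists s l, s 0 = x0 /\ increasing s /\ (forall n, R (s n) (s (S n))) /\ converges s l.
Proof.
  intro H. destruct (seq_rec (fun _ x y => x << y /\ R x y) x0) as [s [Hs0 Hs]].
  { intros _. exact H. }
  destruct (increasing_converges s) as [l Hl]; [intro n; apply Hs|].
  exists s, l.
  repeat split; [exact Hs0 | intro n; apply Hs | intro n; apply Hs | apply Hl | apply Hl].
Qed.

Definition limit_point (C : T -> Prop) (b : T) : Prop :=
  (exists x, x << b) /\ forall x, x << b -> exists a, C a /\ x << a /\ a << b.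

Lemma limit_point_mono (C C' : T -> Prop) b :
  (forall x, C x -> C' x) -> limit_point C b -> limit_point C' b.
Proof.
  intros HC [Hne Hcof]. split; [exact Hne|]. intros x Hx.
  destruct (Hcof x Hx) as [a [Ca Ha]]. eauto.
Qed.

Lemma limit_point_trans C b : limit_point (limit_point C) b -> limit_point C b.
Proof.
  intros [Hne Hcof]. split; [exact Hne|]. intros x Hx.
  destruct (Hcof x Hx) as [a [[_ Ha] [Hxa Hab]]].
  destruct (Ha x Hxa) as [c [Cc [Hxc Hca]]].
  exists c. repeat split; [exact Cc | exact Hxc | exact (lt_trans _ _ _ Hca Hab)].
Qed.

Lemma limit_point_above2 C b x y :
  limit_point C b -> x << b -> y << b -> exists a, C a /\ x << a /\ y << a /\ a << b.
Proof.
  intros [_ Hcof] Hx Hy. destruct (exists_max_below x y b Hx Hy) as [m [Hxm [Hym Hmb]]].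
  destruct (Hcof m Hmb) as [a [Ca [Hma Hab]]].
  exists a. repeat split; [exact Ca | exact (le_lt_trans _ _ _ Hxm Hma) |
                           exact (le_lt_trans _ _ _ Hym Hma) | exact Hab].
Qed.

Lemma converges_limit_point C s l :
  converges s l -> (forall n, exists a, C a /\ s n << a /\ a << l) -> limit_point C l.
Proof.
  intros [Hl Hcof] H. split; [exists (s 0); apply Hl|]. intros x Hx.
  destruct (Hcof x Hx) as [n Hn]. destruct (H n) as [a [Ca [Hna Hal]]].
  exists a. repeat split; [exact Ca | exact (lt_trans _ _ _ Hn Hna) | exact Hal].
Qed.

Lemma club_intro C :
  (forall x, exists a, C a /\ x << a) -> (forall b, limit_point C b -> C b) -> club C.
Proof.
  intros Hunb Hcl. split; [|split].
  - intros; exact I.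
  - intros x _. destruct (Hunb x) as [a [Ca Hxa]]. exists a. repeat split; assumption.
  - intros b _ Hne Hcof. apply Hcl. split; assumption.
Qed.

Lemma club_unbounded C x : club C -> exists a, C a /\ x << a.
Proof. intros [_ [Hunb _]]. destruct (Hunb x I) as [a [Ca [_ Hxa]]]. eauto. Qed.

Lemma club_closed C b : club C -> limit_point C b -> C b.
Proof. intros [_ [_ Hcl]] [Hne Hcof]. exact (Hcl b I Hne Hcof). Qed.

Lemma club_above m : club (fun y => m << y).
Proof.
  apply club_intro.
  - intro x. destruct (exists_above2 x m) as [z [Hxz Hmz]]. eauto.
  - intros b [[x Hx] Hcof]. destruct (Hcof x Hx) as [a [Hma [_ Hab]]].
    exact (lt_trans _ _ _ Hma Hab).
Qed.

Lemma clubI C1 C2 : club C1 -> club C2 -> club (fun x => C1 x /\ C2 x).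
Proof.
  intros H1 H2. apply club_intro.
  - intro x.
    destruct (omega_limit (fun u v => C2 v /\ exists a, C1 a /\ u << a /\ a << v) x)
      as [s [l [Hs0 [Hinc [Hs Hl]]]]].
    { intro u. destruct (club_unbounded C1 u H1) as [a [C1a Hua]].
      destruct (club_unbounded C2 a H2) as [v [C2v Hav]].
      exists v. split; [exact (lt_trans _ _ _ Hua Hav)|]. eauto. }
    exists l. split; [split|].
    + apply (club_closed _ _ H1), (converges_limit_point _ s l Hl). intro n.
      destruct (Hs n) as [_ [a [C1a [Hna Hav]]]].
      exists a. repeat split; [exact C1a | exact Hna | exact (lt_trans _ _ _ Hav (proj1 Hl _))].
    + apply (club_closed _ _ H2), (converges_limit_point _ s l Hl). intro n.
      exists (s (S n)). repeat split; [apply Hs | apply Hinc | apply Hl].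
    + subst x. apply Hl.
  - intros b Hb. split; [apply (club_closed _ _ H1) | apply (club_closed _ _ H2)];
      eapply limit_point_mono; try exact Hb; intros y [? ?]; assumption.
Qed.

Lemma club_limit_point C : club C -> club (limit_point C).
Proof.
  intro HC. apply club_intro.
  - intro x. destruct (omega_limit (fun _ v => C v) x) as [s [l [Hs0 [Hinc [Hs Hl]]]]].
    { intro u. destruct (club_unbounded C u HC) as [v [Cv Huv]]. eauto. }
    exists l. split; [|subst x; apply Hl].
    apply (converges_limit_point _ s l Hl). intro n.
    exists (s (S n)). repeat split; [apply Hs | apply Hinc | apply Hl].
  - exact (limit_point_trans C).
Qed.

Lemma club_bigcap_unbounded (C : T -> T -> Prop) d x :
  (forall b, club (C b)) -> exists a, x << a /\ forall b, b << d -> C b a.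
Proof.
  intro HC.
  assert (Hstep : forall u, exists v, u << v /\
                    forall b, b << d -> exists c, C b c /\ u << c /\ c << v).
  { intro u. destruct (choice _ (fun b => club_unbounded (C b) u (HC b))) as [c Hc].
    destruct (segment_image_bounded d c) as [m Hm].
    destruct (exists_above2 m u) as [v [Hmv Huv]].
    exists v. split; [exact Huv|]. intros b Hb. exists (c b).
    destruct (Hc b) as [Cbc Huc].
    repeat split; [exact Cbc | exact Huc | exact (lt_trans _ _ _ (Hm b Hb) Hmv)]. }
  destruct (omega_limit _ x Hstep) as [s [l [Hs0 [_ [Hs Hl]]]]].
  exists l. split; [subst x; apply Hl|]. intros b Hb.
  apply (club_closed _ _ (HC b)), (converges_limit_point _ s l Hl). intro n.
  destruct (Hs n b Hb) as [c [Cbc [Hnc Hc]]].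
  exists c. repeat split; [exact Cbc | exact Hnc | exact (lt_trans _ _ _ Hc (proj1 Hl _))].
Qed.

Lemma club_diagonal (C : T -> T -> Prop) :
  (forall b, club (C b)) -> club (fun a => forall b, b << a -> C b a).
Proof.
  intro HC. apply club_intro.
  - intro x.
    destruct (omega_limit (fun u v => forall b, b << u -> C b v) x) as [s [l [Hs0 [Hinc [Hs Hl]]]]].
    { intro u. destruct (club_bigcap_unbounded C u u HC) as [v Hv]. eauto. }
    exists l. split; [|subst x; apply Hl].
    intros b Hb. apply (club_closed _ _ (HC b)). split; [eauto|]. intros y Hy.
    destruct (converges_above2 s l y b Hl Hy Hb) as [n [Hyn Hbn]].
    exists (s (S n)).
    repeat split; [exact (Hs n b Hbn) | exact (lt_trans _ _ _ Hyn (Hinc n)) | apply Hl].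
  - intros c Hc b Hb. apply (club_closed _ _ (HC b)). split; [eauto|]. intros x Hx.
    destruct (limit_point_above2 _ c x b Hc Hx Hb) as [a [Ha [Hxa [Hba Hac]]]].
    exists a. auto.
Qed.

Lemma stationary_in_mono D (X Y : T -> Prop) :
  stationary_in T lt D X -> (forall x, X x -> Y x) -> stationary_in T lt D Y.
Proof. intros HX HXY C HC. destruct (HX C HC) as [x [Xx Cx]]. eauto. Qed.

Lemma stationary_nonempty X : stat X -> exists x, X x.
Proof.
  intro HX. destruct T_inhabited as [m].
  destruct (HX _ (club_above m)) as [x [Xx _]]. eauto.
Qed.

Lemma not_stationary_club X : ~ stat X -> exists C, club C /\ forall x, C x -> ~ X x.
Proof.
  intro H. apply NNPP. intro Hno. apply H. intros C HC. apply NNPP. intro Hdisj.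
  apply Hno. exists C. split; [exact HC|]. intros x Cx Xx. apply Hdisj. eauto.
Qed.

Lemma stationary_union X A B :
  stat X -> (forall x, X x -> A x \/ B x) -> stat A \/ stat B.
Proof.
  intros HX HAB. apply NNPP. intro H.
  destruct (not_stationary_club A) as [CA [HCA HA]]; [tauto|].
  destruct (not_stationary_club B) as [CB [HCB HB]]; [tauto|].
  destruct (HX _ (clubI _ _ HCA HCB)) as [x [Xx [CAx CBx]]].
  destruct (HAB x Xx); [apply (HA x) | apply (HB x)]; assumption.
Qed.

Lemma pressing_down W (f : T -> T) :
  stat W -> (forall a, W a -> f a << a) -> exists b, stat (fun a => W a /\ f a = b).
Proof.
  intros HW Hf. apply NNPP. intro Hns.
  assert (Hclub : forall b, exists C, club C /\ forall a, C a -> ~ (W a /\ f a = b)).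
  { intro b. apply not_stationary_club. intro Hb. apply Hns. eauto. }
  destruct (choice _ Hclub) as [C HC].
  destruct (HW _ (club_diagonal C (fun b => proj1 (HC b)))) as [a [Wa Ha]].
  exact (proj2 (HC (f a)) a (Ha _ (Hf a Wa)) (conj Wa eq_refl)).
Qed.

Lemma increasing_no_limit_point s b n :
  increasing s -> b <<= s n -> ~ limit_point (fun x => exists k, s k = x) b.
Proof.
  intro Hs. revert b. induction n as [|n IH]; intros b Hbn Hb.
  - destruct Hb as [[x Hx] Hcof]. destruct (Hcof x Hx) as [_ [[k <-] [_ Hkb]]].
    exact (le_not_lt _ _ (increasing_le s 0 k Hs (Nat.le_0_l k)) (lt_le_trans _ _ _ Hkb Hbn)).
  - destruct (classic (b <<= s n)) as [Hbn' | Hnb]; [exact (IH b Hbn' Hb)|].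
    apply not_le_lt in Hnb. destruct Hb as [_ Hcof].
    destruct (Hcof _ Hnb) as [_ [[k <-] [Hnk Hkb]]].
    destruct (Nat.le_gt_cases k n) as [Hkn | Hnk'].
    + exact (le_not_lt _ _ (increasing_le s k n Hs Hkn) Hnk).
    + exact (le_not_lt _ _ (increasing_le s (S n) k Hs Hnk') (lt_le_trans _ _ _ Hkb Hbn)).
Qed.

Definition least_above (u v z : T) : Prop :=
  u << z /\ v << z /\ forall w, u << w -> v << w -> ~ w << z.

Lemma exists_least_above u v : exists z, least_above u v z.
Proof.
  destruct (exists_least (fun z => u << z /\ v << z) (exists_above2 u v)) as [z [[Hu Hv] Hmin]].
  exists z. repeat split; [exact Hu | exact Hv |]. intros w Huw Hvw. exact (Hmin w (conj Huw Hvw)).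
Qed.

Lemma least_above_not_limit u v z : least_above u v z -> ~ limit_point (whole T) z.
Proof.
  intros [Hu [Hv Hmin]] Hz.
  destruct (limit_point_above2 _ z u v Hz Hu Hv) as [w [_ [Huw [Hvw Hwz]]]].
  exact (Hmin w Huw Hvw Hwz).
Qed.

Lemma least_above_below_limit u v z a :
  least_above u v z -> limit_point (whole T) a -> u << a -> v << a -> z << a.
Proof.
  intros [_ [_ Hmin]] Ha Hu Hv.
  destruct (limit_point_above2 _ a u v Ha Hu Hv) as [w [_ [Huw [Hvw Hwa]]]].
  exact (le_lt_trans _ _ _ (not_lt_le _ _ (Hmin w Huw Hvw)) Hwa).
Qed.

(* An increasing omega-sequence of successor points, cofinal in a. *)
Lemma countable_cof_club_below a :
  limit_point (whole T) a -> ~ uncountable_cof T lt a ->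
  exists D, club_in T lt (below T lt a) D /\ forall x, D x -> ~ limit_point (whole T) x.
Proof.
  intros Ha Hcof.
  assert (Hf : exists f : nat -> T,
             (forall n, f n << a) /\ forall x, x << a -> exists n, x <<= f n).
  { apply NNPP. intro Hf. apply Hcof. split; [apply Ha | exact Hf]. }
  destruct Hf as [f [Hfa Hfcof]].
  destruct (seq_rec (fun n u z => least_above u (f n) z) (f 0)) as [s [Hs0 Hs]].
  { intros n u. apply exists_least_above. }
  assert (Hinc : increasing s) by (intro n; apply (Hs n)).
  assert (Hsa : forall n, s n << a).
  { induction n as [|n IH]; [now rewrite Hs0|].
    exact (least_above_below_limit _ _ _ _ (Hs n) Ha IH (Hfa n)). }
  assert (Hfs : forall n, f n << s (S n)) by (intro n; apply (Hs n)).
  exists (fun x => exists n, s (S n) = x). split; [split; [|split]|].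
  - intros x [n <-]. apply Hsa.
  - intros x Hx. destruct (Hfcof x Hx) as [n Hxn].
    exists (s (S n)). repeat split; [eauto | apply Hsa | exact (le_lt_trans _ _ _ Hxn (Hfs n))].
  - intros b Hb Hne Hcl. exfalso. destruct (Hfcof b Hb) as [n Hbn].
    apply (increasing_no_limit_point s b (S n) Hinc).
    + left. exact (le_lt_trans _ _ _ Hbn (Hfs n)).
    + apply (limit_point_mono (fun x => exists n, s (S n) = x)); [intros x [k <-]; eauto |].
      split; assumption.
  - intros x [n <-]. exact (least_above_not_limit _ _ _ (Hs n)).
Qed.

Lemma uncountable_cof_club_below C a :
  uncountable_cof T lt a -> limit_point C a ->
  club_in T lt (below T lt a) (fun x => x << a /\ limit_point C x).
Proof.
  intros Hcof [_ HaC]. split; [|split].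
  - intros x [Hx _]. exact Hx.
  - intros x Hx. destruct (HaC x Hx) as [a0 [Ca0 [Hxa0 Ha0a]]].
    destruct (omega_limit (fun u v => u << a -> C v /\ v << a) a0) as [s [l [Hs0 [Hinc [Hs Hl]]]]].
    { intro u. destruct (classic (u << a)) as [Hu | Hu].
      - destruct (HaC u Hu) as [v [Cv [Huv Hva]]]. eauto.
      - destruct (no_greatest u) as [v Huv]. exists v. tauto. }
    assert (Hsa : forall n, s n << a).
    { induction n as [|n IH]; [now rewrite Hs0 | exact (proj2 (Hs n IH))]. }
    assert (Hla : l << a).
    { destruct (converges_least s l a Hl Hsa) as [Hla | ->]; [exact Hla|].
      exfalso. apply (proj2 Hcof). exists s. split; [exact Hsa|].
      intros y Hy. destruct (proj2 Hl y Hy) as [n Hn]. exists n. left. exact Hn. }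
    exists l. split; [split; [exact Hla|] | split; [exact Hla|]].
    + apply (converges_limit_point _ s l Hl). intro n. exists (s (S n)).
      repeat split; [exact (proj1 (Hs n (Hsa n))) | apply Hinc | apply Hl].
    + apply (lt_trans _ _ _ Hxa0). rewrite <- Hs0. apply Hl.
  - intros b Hb Hne Hcl. split; [exact Hb|]. apply limit_point_trans.
    apply (limit_point_mono (fun x => x << a /\ limit_point C x)); [tauto | split; assumption].
Qed.

Lemma limit_point_club_below C a :
  limit_point C a ->
  exists D, club_in T lt (below T lt a) D /\
            forall x, D x -> limit_point (whole T) x -> limit_point C x.
Proof.
  intro Ha. destruct (classic (uncountable_cof T lt a)) as [Hcof | Hcof].
  - exists (fun x => x << a /\ limit_point C x).
    split; [exact (uncountable_cof_club_below C a Hcof Ha) | intros x [_ Hx] _; exact Hx].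
  - destruct (countable_cof_club_below a) as [D [HD HDlim]]; [|exact Hcof|].
    + apply (limit_point_mono C); [intros; exact I | exact Ha].
    + exists D. split; [exact HD|]. intros x Dx Hx. contradiction (HDlim x Dx Hx).
Qed.

Definition splits (W : T -> Prop) (P : T -> T -> Prop) : Prop :=
  (forall d a, P d a -> W a) /\ (forall d d' a, P d a -> P d' a -> d = d') /\
  (forall e, exists d, e <<= d /\ stat (P d)).

Lemma splits_mono (W X : T -> Prop) P : (forall a, W a -> X a) -> splits W P -> splits X P.
Proof. intros HWX [Hsub Hdisj]. split; [eauto | exact Hdisj]. Qed.

Lemma regressive_splits W (g : T -> T) :
  (forall a, W a -> g a << a) -> (forall e, stat (fun a => W a /\ e <<= g a)) ->
  splits W (fun d a => W a /\ g a = d).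
Proof.
  intros Hg Hstat. split; [|split].
  - intros d a [Wa _]. exact Wa.
  - intros d d' a [_ <-] [_ <-]. reflexivity.
  - intro e. destruct (pressing_down _ g (Hstat e)) as [d Hd]; [intros a [Wa _]; auto|].
    destruct (stationary_nonempty _ Hd) as [a [[_ Hea] Hda]].
    exists d. split; [now rewrite <- Hda|].
    eapply stationary_in_mono; [exact Hd|]. intros x [[Wx _] Hx]. auto.
Qed.

Lemma exists_pair_closed_under W (f : T -> T -> T) :
  stat W ->
  (forall xi, exists e, ~ stat (fun a => (W a /\ xi << a) /\ e <<= f xi a)) ->
  exists b a, W b /\ W a /\ b << a /\ (exists x, x << b) /\ forall xi, xi << b -> f xi a << b.
Proof.
  intros HW Hbad. destruct (choice _ Hbad) as [e He].
  destruct (choice _ (fun xi => not_stationary_club _ (He xi))) as [K HK].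
  set (D := fun a => forall xi, xi << a -> K xi a /\ e xi << a).
  assert (HD : club D).
  { apply (club_diagonal (fun xi a => K xi a /\ e xi << a)). intro xi.
    apply clubI; [apply HK | apply club_above]. }
  destruct (stationary_nonempty W HW) as [m Wm].
  destruct (HW _ (clubI _ _ HD (club_above m))) as [b [Wb [Db Hmb]]].
  destruct (HW _ (clubI _ _ HD (club_above b))) as [a [Wa [Da Hba]]].
  exists b, a. repeat split; [exact Wb | exact Wa | exact Hba | eauto |].
  intros xi Hxi. assert (Hxia : xi << a) by exact (lt_trans _ _ _ Hxi Hba).
  apply (lt_trans _ (e xi)); [|exact (proj2 (Db xi Hxi))].
  apply not_le_lt. intro Hle.
  exact (proj2 (HK xi) a (proj1 (Da xi Hxia)) (conj (conj Wa Hxia) Hle)).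
Qed.

(* Let f xi a be a point of C_a above xi.  Either for some xi the regressive
   map f xi takes values above every e on a stationary set, and pressing down
   splits W by its values, or a diagonal intersection yields b < a in W with
   b a limit point of C_a, although C_a misses W. *)
Lemma nonreflecting_splits W :
  stat W ->
  (forall a, W a -> exists C, club_in T lt (below T lt a) C /\ forall x, C x -> ~ W x) ->
  exists P, splits W P.
Proof.
  intros HW HC.
  destruct (choice_on W _ (inhabits (whole T)) HC) as [C HC'].
  assert (Hf : forall xi, exists g : T -> T,
             forall a, W a /\ xi << a -> C a (g a) /\ xi << g a /\ g a << a).
  { intro xi.
    apply (choice_on (fun a => W a /\ xi << a) (fun a c => C a c /\ xi << c /\ c << a) T_inhabited).
    intros a [Wa Hxia]. destruct (HC' a Wa) as [[_ [Hunb _]] _].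
    destruct (Hunb xi Hxia) as [c [Cc [Hca Hxic]]]. eauto. }
  destruct (choice _ Hf) as [f Hf'].
  destruct (classic (exists xi, forall e, stat (fun a => (W a /\ xi << a) /\ e <<= f xi a)))
    as [[xi Hxi] | Hnone].
  - exists (fun d a => (W a /\ xi << a) /\ f xi a = d).
    apply (splits_mono (fun a => W a /\ xi << a)); [intros a [Wa _]; exact Wa|].
    apply regressive_splits; [|exact Hxi]. intros a Ha. exact (proj2 (proj2 (Hf' xi a Ha))).
  - exfalso. destruct (exists_pair_closed_under W f HW) as [b [a [Wb [Wa [Hba [Hb Hfb]]]]]].
    + intro xi. apply NNPP. intro Hall. apply Hnone. exists xi. intro e.
      apply NNPP. intro He. apply Hall. eauto.
    + destruct (HC' a Wa) as [[_ [_ Hcl]] Hdisj]. apply (Hdisj b); [|exact Wb].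
      apply Hcl; [exact Hba | exact Hb |]. intros x Hx. exists (f x a).
      destruct (Hf' x a (conj Wa (lt_trans _ _ _ Hx Hba))) as [Cfa [Hxf _]]. auto.
Qed.

(* Minimal points of X among the limit points of a club C do not reflect. *)
Lemma stationary_splits X : stat X -> exists P, splits X P.
Proof.
  intro HX.
  set (L := fun a => X a /\ limit_point (whole T) a).
  set (W := fun a => L a /\ exists D, club_in T lt (below T lt a) D /\ forall x, D x -> ~ L x).
  assert (HW : stat W).
  { intros C HC.
    destruct (exists_least (fun a => X a /\ limit_point C a)) as [a [[Xa Ca] Hmin]].
    { destruct (HX _ (club_limit_point C HC)) as [a Ha]. eauto. }
    exists a. split; [|exact (club_closed C a HC Ca)].
    split; [split; [exact Xa | apply (limit_point_mono C); [intros; exact I | exact Ca]]|].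
    destruct (limit_point_club_below C a Ca) as [D [HD HDC]].
    exists D. split; [exact HD|]. intros x Dx [Xx Lx].
    exact (Hmin x (conj Xx (HDC x Dx Lx)) (proj1 HD x Dx)). }
  destruct (nonreflecting_splits W HW) as [P HP].
  { intros a [_ [D [HD HDL]]]. exists D. split; [exact HD|].
    intros x Dx [Lx _]. exact (HDL x Dx Lx). }
  exists P. apply (splits_mono W); [intros a [[Xa _] _]; exact Xa | exact HP].
Qed.

Lemma stationary_shrink (Y : nat -> T -> Prop) k :
  (forall n, stat (Y n)) ->
  exists P, (forall x, P x -> Y k x) /\ stat P /\ forall n, stat (fun x => Y n x /\ ~ P x).
Proof.
  intro HY. destruct (stationary_splits (Y k) (HY k)) as [P [HPsub [HPdisj HPstat]]].
  set (bad := fun n d => ~ stat (fun x => Y n x /\ ~ P d x)).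
  assert (Hbad : forall n d d', bad n d -> bad n d' -> d = d').
  { intros n d d' Hd Hd'. apply NNPP. intro Hne.
    destruct (stationary_union (Y n) (fun x => Y n x /\ ~ P d x) (fun x => Y n x /\ ~ P d' x)
                               (HY n))
      as [H | H]; [| exact (Hd H) | exact (Hd' H)].
    intros x Yx. destruct (classic (P d x)) as [Pd | Pd]; [|left; auto].
    destruct (classic (P d' x)) as [Pd' | Pd']; [|right; auto].
    exfalso. exact (Hne (HPdisj d d' x Pd Pd')). }
  destruct (countable_family_bounded bad Hbad) as [b Hb].
  destruct (HPstat b) as [d [Hbd Hd]].
  exists (P d). split; [exact (HPsub d)|]. split; [exact Hd|].
  intro n. apply NNPP. intro Hn. exact (le_not_lt _ _ Hbd (Hb n d Hn)).
Qed.

(* On [m*m, (m+1)*(m+1)) this runs through 0, ..., 2m. *)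
Definition cycle_index (i : nat) : nat := i - Nat.sqrt i * Nat.sqrt i.

Lemma cycle_index_recurs n k : exists i, k <= i /\ cycle_index i = n.
Proof.
  exists ((n + k) * (n + k) + n). unfold cycle_index.
  rewrite (Nat.sqrt_unique _ (n + k)); [split|split]; nia.
Qed.

Fixpoint taken (pick : nat -> (T -> Prop) -> T -> Prop) (i : nat) : T -> Prop :=
  match i with
  | 0 => fun _ => False
  | S i => fun x => taken pick i x \/ pick (cycle_index i) (taken pick i) x
  end.

Lemma taken_mono pick i j x : i <= j -> taken pick i x -> taken pick j x.
Proof. intro Hij. induction Hij as [|j _ IH]; [auto | intro Hx; left; auto]. Qed.

Definition pairwise_disjoint (U : nat -> T -> Prop) : Prop :=
  forall i j x, U i x -> U j x -> i = j.

Lemma disjoint_stationary_refinement (M : nat -> T -> Prop) :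
  (forall n, stat (M n)) ->
  exists U, (forall i, stat (U i)) /\ (forall i x, U i x -> M (cycle_index i) x) /\
            pairwise_disjoint U.
Proof.
  intro HM.
  set (avoid := fun (Q : T -> Prop) n x => M n x /\ ~ Q x).
  assert (Hpick : forall k Q, exists P, (forall n, stat (avoid Q n)) ->
            (forall x, P x -> avoid Q k x) /\ stat P /\
            forall n, stat (fun x => avoid Q n x /\ ~ P x)).
  { intros k Q. destruct (classic (forall n, stat (avoid Q n))) as [HQ | HQ].
    - destruct (stationary_shrink (avoid Q) k HQ) as [P HP]. eauto.
    - exists Q. tauto. }
  destruct (choice (fun k (g : (T -> Prop) -> T -> Prop) => forall Q, _)
              (fun k => choice _ (Hpick k))) as [pick Hpick'].
  assert (Hfree : forall i n, stat (avoid (taken pick i) n)).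
  { induction i as [|i IH]; intro n.
    - apply (stationary_in_mono _ (M n)); [exact (HM n) | intros x Mx; split; auto].
    - destruct (Hpick' (cycle_index i) (taken pick i) IH) as [_ [_ Hrest]].
      apply (stationary_in_mono _ _ _ (Hrest n)). intros x [[Mx Hx] Hp]. split; [exact Mx|].
      intros [H | H]; auto. }
  exists (fun i => pick (cycle_index i) (taken pick i)). split; [|split].
  - intro i. exact (proj1 (proj2 (Hpick' _ _ (Hfree i)))).
  - intros i x Hx. exact (proj1 (proj1 (Hpick' _ _ (Hfree i)) x Hx)).
  - assert (Hlt : forall i j x, j < i -> pick (cycle_index i) (taken pick i) x ->
                    ~ pick (cycle_index j) (taken pick j) x).
    { intros i j x Hji Hi Hj. apply (proj2 (proj1 (Hpick' _ _ (Hfree i)) x Hi)).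
      apply (taken_mono pick (S j)); [exact Hji | right; exact Hj]. }
    intros i j x Hi Hj. destruct (Nat.lt_trichotomy i j) as [H | [H | H]];
      [contradiction (Hlt j i x H Hj Hi) | exact H | contradiction (Hlt i j x H Hi Hj)].
Qed.

Definition successor_row (U : nat -> T -> Prop) (a : T) : T -> Prop :=
  fun x => (exists i, U i a /\ U (S i) x) \/ ((forall i, ~ U i a) /\ U 0 x).

Lemma successor_row_stationary U a : (forall i, stat (U i)) -> stat (successor_row U a).
Proof.
  intro HU. destruct (classic (exists i, U i a)) as [[i Ui] | Hnone].
  - apply (stationary_in_mono _ (U (S i))); [exact (HU (S i)) | intros x Ux; left; eauto].
  - apply (stationary_in_mono _ (U 0)); [exact (HU 0)|].
    intros x Ux. right. split; [|exact Ux]. intros i Ui. eauto.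
Qed.

Lemma successor_row_succ U a i x :
  pairwise_disjoint U -> U i a -> successor_row U a x -> U (S i) x.
Proof.
  intros Hdisj Ui [[j [Uj Ux]] | [Hnone _]]; [|contradiction (Hnone i Ui)].
  rewrite (Hdisj i j a Ui Uj). exact Ux.
Qed.

Lemma DSR1_reflects_tail SS U :
  DSR1 T lt SS -> (forall i, stat (U i)) -> (forall i x, U i x -> SS x) -> pairwise_disjoint U ->
  exists g, uncountable_cof T lt g /\
            exists k, forall i, k <= i -> stationary_in T lt (below T lt g) (U i).
Proof.
  intros HDSR HU HUS Hdisj.
  destruct (HDSR (fun _ => 1) (fun a _ => successor_row U a)) as [g [Hg [F [HF HFrefl]]]].
  { intros _. exact (le_n 1). }
  { intros a i _. split; [exact (successor_row_stationary U a HU)|].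
    intros x [[k [_ Ux]] | [_ Ux]]; eauto. }
  assert (Hrow : forall a, F a -> stationary_in T lt (below T lt g) (successor_row U a))
    by (intros a Fa; exact (proj2 (HFrefl a Fa 0 (le_n 1)))).
  assert (Hstep : forall a i, F a -> U i a -> stationary_in T lt (below T lt g) (U (S i)))
    by (intros a i Fa Ui; exact (stationary_in_mono _ _ _ (Hrow a Fa)
                                   (fun x => successor_row_succ U a i x Hdisj Ui))).
  assert (Hstart : exists k, stationary_in T lt (below T lt g) (U k)).
  { destruct Hg as [[x Hx] _]. destruct HF as [_ [Hunb _]].
    destruct (Hunb x Hx) as [a [Fa _]].
    destruct (classic (exists i, U i a)) as [[i Ui] | Hnone]; [exists (S i); eauto|].
    exists 0. apply (stationary_in_mono _ _ _ (Hrow a Fa)).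
    intros y [[i [Ui _]] | [_ Uy]]; [contradiction (Hnone (ex_intro _ i Ui)) | exact Uy]. }
  destruct Hstart as [k Hk]. exists g. split; [exact Hg|]. exists k.
  intros i Hki. induction Hki as [|i _ IH]; [exact Hk|].
  destruct (IH F HF) as [a [Ui Fa]]. exact (Hstep a i Fa Ui).
Qed.

Theorem Refl_omega_of_DSR1 SS : DSR1 T lt SS -> Refl_omega T lt SS.
Proof.
  intros HDSR M HM.
  destruct (disjoint_stationary_refinement M (fun n => proj1 (HM n))) as [U [HU [HUM Hdisj]]].
  destruct (DSR1_reflects_tail SS U HDSR HU) as [g [Hg [k Hk]]]; [|exact Hdisj|].
  { intros i x Ux. exact (proj2 (HM _) x (HUM i x Ux)). }
  exists g. intro n. split; [exact Hg|].
  destruct (cycle_index_recurs n k) as [i [Hki Hi]].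
  apply (stationary_in_mono _ _ _ (Hk i Hki)). intros x Ux. rewrite <- Hi. exact (HUM i x Ux).
Qed.

End StationaryReflection.

Theorem lemma2p4 (T : Type) (lt : T -> T -> Prop) (S : T -> Prop) :
  well_order T lt ->
  regular_uncountable_cardinal T lt ->
  stationary T lt S ->
  DSR1 T lt S ->
  Refl_omega T lt S.
Proof.
  intros Hwo Hruc _. exact (Refl_omega_of_DSR1 T lt Hwo Hruc S).
Qed.
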